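(* Let $\rho_{Q^n}$ be an arbitrary normalized state on $Q^{\otimes n}$ and let $\{P,I-P\}$ be a two-outcome POVM on $Q$ with $\|P\|_\infty\le\delta$. Let $\boldsymbol N_P$ be the number of $P$-outcomes when each subsystem of $\rho_{Q^n}$ is measured with $\{P,I-P\}$. Then $$\Pr\Big(\frac{\boldsymbol N_P}{n}\ge\delta+c\Big)\le\sum_{i=n(\delta+c)}^{n}\binom ni\delta^i(1-\delta)^{n-i}$$ (sum over integers $i$ with $n(\delta+c)\le i\le n$). *)

From mathcomp Require Import all_boot all_order all_algebra all_field.
Set Implicit Arguments. Unset Strict Implicit. Unset Printing Implicit Defensive.
Import Order.TTheory GRing.Theory Num.Theory.
Local Open Scope ring_scope.

(* Computational basis of Q^{(x)n}, Q = C^d: strings x : 'I_n -> 'I_d.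
   Operators on a finite-dim Hilbert space with basis I are kernels I -> I -> C. *)
Definition basisn (n d : nat) : finType := {ffun 'I_n -> 'I_d}.

Definition hermitian (I : finType) (A : I -> I -> algC) : Prop :=
  forall x y, A y x = (A x y)^*.
Definition psd (I : finType) (A : I -> I -> algC) : Prop :=
  hermitian A /\
  forall v : I -> algC, 0 <= \sum_x \sum_y (v x)^* * A x y * v y.

Definition is_state (n d : nat) (rho : basisn n d -> basisn n d -> algC) : Prop :=
  psd rho /\ \sum_x rho x x = 1.

Definition is_two_povm (d : nat) (P : 'M[algC]_d) : Prop :=
  psd (fun i j => P i j) /\ psd (fun i j => (1%:M - P) i j).

Definition opnorm_le (d : nat) (P : 'M[algC]_d) (delta : algC) : Prop :=
  0 <= delta /\
  forall v : 'cV[algC]_d,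
    \sum_i `|(P *m v) i 0| ^+ 2 <= delta ^+ 2 * \sum_i `|v i 0| ^+ 2.

Definition povm_elem (d : nat) (P : 'M[algC]_d) (b : bool) : 'M[algC]_d :=
  if b then P else 1%:M - P.

Definition prod_elem (n d : nat) (P : 'M[algC]_d) (s : {ffun 'I_n -> bool})
  (x y : basisn n d) : algC :=
  \prod_(i < n) povm_elem P (s i) (x i) (y i).

(* Born rule: probability of outcome string s, Tr(rho E_s). *)
Definition outcome_prob (n d : nat) (rho : basisn n d -> basisn n d -> algC)
  (P : 'M[algC]_d) (s : {ffun 'I_n -> bool}) : algC :=
  \sum_x \sum_y rho x y * prod_elem P s y x.

Definition NP (n : nat) (s : {ffun 'I_n -> bool}) : nat := #|[set i | s i]|.

Definition prob_NP_ge (n d : nat) (rho : basisn n d -> basisn n d -> algC)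
  (P : 'M[algC]_d) (delta c : algC) : algC :=
  \sum_(s : {ffun 'I_n -> bool} | delta + c <= (NP s)%:R / n%:R)
    outcome_prob rho P s.

From Pilot Require Import Defs.
From mathcomp Require Import all_boot all_order all_algebra all_field.
From mathcomp Require Import ring.
Set Implicit Arguments.
Unset Strict Implicit.
Unset Printing Implicit Defensive.
Import Order.TTheory GRing.Theory Num.Theory.
Local Open Scope ring_scope.
Local Open Scope sesquilinear_scope.

(* Diagonalise P = sum_k lam_k |u_k><u_k| with 0 <= lam_k <= delta <= 1.
   On each copy of Q, the measurement {P, I - P} and the "coin"
   {delta I, (1 - delta) I} are both coarse-grainings of the three-outcome
   POVM
     {sum_k lam_k |u_k><u_k|, sum_k (delta - lam_k) |u_k><u_k|, (1 - delta) I},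
   and every refined outcome counted by N_P is also a success of the coin.
   Measuring rho with the refined product POVM therefore couples N_P with the
   number of successes of the coin, which dominates it pointwise and, since
   the coin elements are scalar, is Binomial(n, delta) whatever rho is. *)

Lemma sqr_norm_cV_gt0 d (v : 'cV[algC]_d) : v != 0 -> 0 < \sum_i `|v i 0| ^+ 2.
Proof.
move=> v_neq0; have sqr_ge0 i : 0 <= `|v i 0| ^+ 2 by rewrite exprn_ge0.
rewrite lt_def sumr_ge0 ?andbT //; apply: contra v_neq0 => /eqP v0.
apply/eqP/matrixP => i j; rewrite ord1 mxE.
by apply/eqP; rewrite -normr_eq0 -[_ == 0](@expf_eq0 _ _ 2) (psumr_eq0P _ v0).
Qed.

Section Eigenvalue.
Variables (d : nat) (A : 'M[algC]_d) (v : 'cV[algC]_d) (lam : algC).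
Hypotheses (v_neq0 : v != 0) (Av : A *m v = lam *: v).

Lemma psd_eigenvalue_ge0 : psd (fun i j => A i j) -> 0 <= lam.
Proof.
move=> [_ psdA]; have := psdA (fun i => v i 0).
suff -> : \sum_x \sum_y (v x 0)^* * A x y * v y 0 = lam * \sum_i `|v i 0| ^+ 2.
  by rewrite pmulr_lge0 // sqr_norm_cV_gt0.
rewrite mulr_sumr; apply: eq_bigr => x _.
have /matrixP/(_ x 0) := Av; rewrite !mxE => Avx.
under eq_bigr do rewrite -mulrA.
by rewrite -mulr_sumr Avx normCK; ring.
Qed.

Lemma opnorm_eigenvalue_le delta : opnorm_le A delta -> `|lam| <= delta.
Proof.
move=> [delta_ge0 /(_ v)]; rewrite Av.
under eq_bigr do rewrite mxE normrM exprMn.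
by rewrite -mulr_sumr ler_pM2r ?sqr_norm_cV_gt0 // ler_sqr ?nnegrE.
Qed.

End Eigenvalue.

Lemma unitary_row_neq0 m n (M : 'M[algC]_(m, n)) k :
  M \is unitarymx -> (row k M)^t* != 0.
Proof.
move=> /unitarymxP /matrixP /(_ k k); rewrite !mxE eqxx mulr1n => Mkk.
apply/eqP => /matrixP row0; suff : (1 : algC) == 0 by rewrite oner_eq0.
rewrite -Mkk big1 // => j _.
by have := row0 j 0; rewrite !mxE => ->; rewrite mulr0.
Qed.

Lemma unitary_conj_scalar n (M : 'M[algC]_n) (a : algC) :
  M \is unitarymx -> M^t* *m diag_mx (const_mx a) *m M = a%:M.
Proof.
move=> uM; rewrite diag_const_mx mul_mx_scalar -scalemxAl.
by rewrite -invmx_unitary // mulVmx ?unitarymx_unit // scalemx1.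
Qed.

Section HermitianSpectral.
Variables (d : nat) (A : 'M[algC]_d).
Hypothesis A_herm : Defs.hermitian (fun i j => A i j).

Lemma hermitian_kernel_normalmx : A \is normalmx.
Proof.
apply/normalmxP; suff -> : A^t* = A by [].
by apply/matrixP => i j; rewrite !mxE; exact/esym/A_herm.
Qed.

Lemma spectral_decomposition :
  A = (spectralmx A)^t* *m diag_mx (spectral_diag A) *m spectralmx A.
Proof.
rewrite -invmx_unitary ?spectral_unitarymx //.
exact/orthomx_spectralP/hermitian_kernel_normalmx.
Qed.

Lemma spectral_eigenvector k :
  A *m (row k (spectralmx A))^t* =
  spectral_diag A 0 k *: (row k (spectralmx A))^t*.
Proof.
set M := spectralmx A; set lam := spectral_diag A.
have AM : A *m M^t* = M^t* *m diag_mx lam.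
  rewrite {1}spectral_decomposition -!mulmxA.
  by rewrite (unitarymxP (spectral_unitarymx A)) mulmx1.
apply/matrixP => i j; rewrite ord1 {j}.
have /matrixP/(_ i k) := AM; rewrite mul_mx_diag !mxE mulrC => <-.
by apply: eq_bigr => j _; rewrite !mxE.
Qed.

End HermitianSpectral.

Lemma psd_spectral_diag_bounds d (A : 'M[algC]_d) delta :
  psd (fun i j => A i j) -> opnorm_le A delta ->
  forall k, 0 <= spectral_diag A 0 k <= delta.
Proof.
move=> psdA normA k.
have v_neq0 := unitary_row_neq0 k (spectral_unitarymx A).
have Av := spectral_eigenvector psdA.1 k.
have lam_ge0 := psd_eigenvalue_ge0 v_neq0 Av psdA.
by rewrite lam_ge0 -(ger0_norm lam_ge0) (opnorm_eigenvalue_le v_neq0 Av normA).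
Qed.

Definition gram (I J : finType) (V : J -> I -> algC) (y x : I) : algC :=
  \sum_k (V k y)^* * V k x.

Lemma unitary_conj_diag_gram n (M : 'M[algC]_n) (mu : 'rV[algC]_n) a b :
  (forall k, 0 <= mu 0 k) ->
  (M^t* *m diag_mx mu *m M) a b = gram (fun k a => sqrtC (mu 0 k) * M k a) a b.
Proof.
move=> mu_ge0; rewrite mul_mx_diag !mxE; apply: eq_bigr => k _.
rewrite !mxE rmorphM /= (@geC0_conj _ (sqrtC _)) ?sqrtC_ge0 //.
by rewrite -[mu 0 k in LHS]sqrtCK; ring.
Qed.

Section Born.
Variables (I : finType) (rho : I -> I -> algC).

Definition born (K : I -> I -> algC) : algC := \sum_x \sum_y rho x y * K y x.

Lemma eq_born K K' : (forall y x, K y x = K' y x) -> born K = born K'.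
Proof.
by move=> eqK; apply: eq_bigr => x _; apply: eq_bigr => y _; rewrite eqK.
Qed.

Lemma born_sum (J : finType) (Pr : pred J) K (L : J -> I -> I -> algC) :
  (forall y x, K y x = \sum_(j | Pr j) L j y x) ->
  born K = \sum_(j | Pr j) born (L j).
Proof.
move=> KL; rewrite /born.
under eq_bigr do under eq_bigr do rewrite KL mulr_sumr.
by under eq_bigr do rewrite exchange_big; rewrite exchange_big.
Qed.

Lemma born_gram_ge0 (J : finType) (V : J -> I -> algC) :
  psd rho -> 0 <= born (gram V).
Proof.
move=> [_ rho_psd].
rewrite (@born_sum _ predT _ (fun k y x => (V k y)^* * V k x)) //.
apply: sumr_ge0 => k _.
suff -> : born (fun y x => (V k y)^* * V k x) =
    \sum_x \sum_y ((V k x)^*)^* * rho x y * (V k y)^* by exact: rho_psd.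
by apply: eq_bigr => x _; apply: eq_bigr => y _; rewrite conjCK; ring.
Qed.

Lemma born_scalar (a : algC) :
  born (fun y x => a * (y == x)%:R) = a * \sum_x rho x x.
Proof.
rewrite /born mulr_sumr; apply: eq_bigr => x _.
rewrite (bigD1 x) //= big1 => [|y /negbTE neq_yx]; last first.
  by rewrite neq_yx !mulr0.
by rewrite eqxx addr0 mulr1 mulrC.
Qed.

End Born.

Section ProductKernels.
Variables (n d : nat).

Definition prod_kernel (C : Type) (G : C -> 'M[algC]_d) (g : {ffun 'I_n -> C})
  (y x : basisn n d) : algC :=
  \prod_i G (g i) (y i) (x i).

Definition coarse (C D : Type) (f : C -> D) (g : {ffun 'I_n -> C}) :
  {ffun 'I_n -> D} := [ffun i => f (g i)].

Lemma prod_kernel_gram (C J : finType) (G : C -> 'M[algC]_d)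
  (B : C -> J -> 'I_d -> algC) :
  (forall c a b, G c a b = gram (B c) a b) ->
  forall g y x, prod_kernel G g y x =
    gram (fun (kk : {ffun 'I_n -> J}) (z : basisn n d) =>
            \prod_i B (g i) (kk i) (z i)) y x.
Proof.
move=> GB g y x; rewrite /prod_kernel /gram; under eq_bigr do rewrite GB.
rewrite bigA_distr_bigA; apply: eq_bigr => kk _.
by rewrite big_split /= rmorph_prod.
Qed.

Lemma prod_kernel_coarse (C D : finType) (f : C -> D) (G : C -> 'M[algC]_d)
  (E : D -> 'M[algC]_d) :
  (forall e, E e = \sum_(c | f c == e) G c) ->
  forall s y x,
    prod_kernel E s y x = \sum_(g | coarse f g == s) prod_kernel G g y x.
Proof.
move=> EG s y x; rewrite /prod_kernel; under eq_bigr do rewrite EG summxE.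
rewrite bigA_distr_big_dep; apply: eq_bigl => g.
apply/familyP/eqP => [fg | <- i]; last by rewrite unfold_in ffunE.
by apply/ffunP => i; have := fg i; rewrite unfold_in ffunE => /eqP.
Qed.

Lemma prod_kernel_scalar (D : Type) (w : D -> algC) s y x :
  prod_kernel (fun e => (w e)%:M) s y x = (\prod_i w (s i)) * (y == x)%:R.
Proof.
rewrite /prod_kernel; under eq_bigr do rewrite mxE -mulr_natr.
rewrite big_split /=; congr (_ * _); have [<-|neq_yx] := eqVneq y x.
  by rewrite big1 // => i _; rewrite eqxx.
have /existsP [i neq_i] : [exists i, y i != x i].
  apply: contraR neq_yx => /existsPn eq_yx.
  by apply/eqP/ffunP => i; apply/eqP/negbNE/eq_yx.
by rewrite (bigD1 i) //= (negbTE neq_i) mul0r.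
Qed.

Lemma born_coarse_event (rho : basisn n d -> basisn n d -> algC)
  (C D : finType) (f : C -> D) (G : C -> 'M[algC]_d) (E : D -> 'M[algC]_d)
  (Q : pred {ffun 'I_n -> D}) :
  (forall e, E e = \sum_(c | f c == e) G c) ->
  \sum_(s | Q s) born rho (prod_kernel E s) =
  \sum_(g | Q (coarse f g)) born rho (prod_kernel G g).
Proof.
move=> EG; rewrite [RHS](partition_big (coarse f) Q) //=.
apply: eq_bigr => s Qs; rewrite (born_sum rho (prod_kernel_coarse EG s)).
by apply: eq_bigl => g; case: eqP => [->|]; rewrite ?Qs ?andbF.
Qed.

Lemma born_prod_kernel_ge0 (rho : basisn n d -> basisn n d -> algC)
  (C J : finType) (G : C -> 'M[algC]_d) (B : C -> J -> 'I_d -> algC) :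
  psd rho -> (forall c a b, G c a b = gram (B c) a b) ->
  forall g, 0 <= born rho (prod_kernel G g).
Proof.
move=> rho_psd GB g.
by rewrite (eq_born rho (prod_kernel_gram GB g)) born_gram_ge0.
Qed.

Lemma born_prod_scalar (rho : basisn n d -> basisn n d -> algC) (D : Type)
  (w : D -> algC) s :
  is_state rho ->
  born rho (prod_kernel (fun e => (w e)%:M) s) = \prod_i w (s i).
Proof.
move=> [_ tr_rho].
by rewrite (eq_born rho (prod_kernel_scalar w s)) born_scalar tr_rho mulr1.
Qed.

Lemma outcome_probE (rho : basisn n d -> basisn n d -> algC) P s :
  outcome_prob rho P s = born rho (prod_kernel (povm_elem P) s).
Proof. by []. Qed.

End ProductKernels.

Lemma sum_sets_by_card (R : pzSemiRingType) (T : finType) (Q : pred nat)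
  (F : nat -> R) :
  \sum_(A : {set T} | Q #|A|) F #|A| =
  \sum_(k < #|T|.+1 | Q k) 'C(#|T|, k)%:R * F k.
Proof.
have card_lt (A : {set T}) : (#|A| < #|T|.+1)%N by rewrite ltnS max_card.
rewrite (partition_big (fun A : {set T} => Ordinal (card_lt A))
                       (fun k : 'I_#|T|.+1 => Q k)) //=.
apply: eq_bigr => k Qk.
rewrite (eq_bigl (fun A => A \in [set A : {set T} | #|A| == k])); last first.
  by move=> A; rewrite inE -val_eqE /=; case: eqP => [->|]; rewrite ?Qk ?andbF.
rewrite (eq_bigr (fun _ => F k)) => [|A]; last by rewrite inE => /eqP ->.
by rewrite sumr_const card_draws mulr_natl.
Qed.

Lemma prodr_if_mem (R : comPzSemiRingType) (T : finType) (A : {set T})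
  (a b : R) :
  \prod_i (if i \in A then a else b) = a ^+ #|A| * b ^+ (#|T| - #|A|).
Proof.
have -> : (#|T| - #|A| = #|~: A|)%N by rewrite [#|~: A|]cardsCs setCK.
rewrite (bigID (mem A)) /= -!prodr_const; congr (_ * _).
  by apply: eq_bigr => i ->.
by apply: eq_big => [i | i /negbTE ->]; rewrite ?inE.
Qed.

Lemma sum_bernoulli_strings (R : comPzSemiRingType) (T : finType)
  (Q : pred nat) (a b : R) :
  \sum_(s : {ffun T -> bool} | Q #|[set i | s i]|)
     \prod_i (if s i then a else b) =
  \sum_(k < #|T|.+1 | Q k) 'C(#|T|, k)%:R * (a ^+ k * b ^+ (#|T| - k)).
Proof.
have setK (A : {set T}) : [set i | [ffun i => i \in A] i] = A.
  by apply/setP => i; rewrite inE ffunE.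
have ffunK (s : {ffun T -> bool}) : [ffun i => i \in [set i | s i]] = s.
  by apply/ffunP => i; rewrite !ffunE inE.
rewrite (reindex (fun A : {set T} => [ffun i => i \in A])); last first.
  by exists (fun s : {ffun T -> bool} => [set i | s i]) => s _;
    [rewrite setK | rewrite ffunK].
rewrite -(sum_sets_by_card T Q (fun k => a ^+ k * b ^+ (#|T| - k))).
apply: eq_big => A; rewrite setK // => _.
by rewrite -prodr_if_mem; apply: eq_bigr => i _; rewrite ffunE.
Qed.

Lemma ler_sum_subpred (R : numDomainType) (I : finType) (P Q : pred I)
  (F : I -> R) :
  (forall i, P i -> Q i) -> (forall i, 0 <= F i) ->
  \sum_(i | P i) F i <= \sum_(i | Q i) F i.
Proof.
move=> PQ F_ge0; rewrite [X in _ <= X](bigID P) /=.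
rewrite (eq_bigl (fun i => Q i && P i)) ?lerDl ?sumr_ge0 // => i.
by case: (boolP (P i)) => [/PQ ->|]; rewrite ?andbF.
Qed.

Lemma ler_mul_nat_of_ler_div (R : numFieldType) (x : R) (n m N : nat) :
  (m <= N)%N -> x <= m%:R / n%:R -> n%:R * x <= N%:R.
Proof.
case: n => [|n] le_mN; first by rewrite mul0r ler0n.
move=> le_x; apply: le_trans (_ : m%:R <= N%:R); last by rewrite ler_nat.
by rewrite mulrC -ler_pdivlMr ?ltr0n.
Qed.

Lemma sumr_bool_pair (V : nmodType) (F : bool * bool -> V) :
  \sum_c F c =
  F (true, true) + F (true, false) + (F (false, true) + F (false, false)).
Proof.
rewrite (eq_bigr (fun c => F (c.1, c.2))) => [|[] //].
by rewrite -(pair_bigA _ (fun a b => F (a, b))) /= !big_bool.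
Qed.

Lemma povm_refinement d (P : 'M[algC]_d) delta :
  psd (fun i j => P i j) -> opnorm_le P delta -> delta <= 1 ->
  exists (G : bool * bool -> 'M[algC]_d)
         (B : bool * bool -> 'I_d -> 'I_d -> algC),
  [/\ forall o a b, G o a b = gram (B o) a b,
      forall p, povm_elem P p = \sum_(o | o.1 && o.2 == p) G o &
      forall b, (if b then delta else 1 - delta)%:M = \sum_(o | o.1 == b) G o].
Proof.
move=> psdP normP delta_le1.
set M := spectralmx P; set lam := spectral_diag P.
have uM : M \is unitarymx := spectral_unitarymx P.
have eP : P = M^t* *m diag_mx lam *m M := spectral_decomposition psdP.1.
(* An outcome (b, p) records b for the coin and p for {P, I - P}. *)
pose mu (o : bool * bool) : 'rV[algC]_d :=
  match o with
  | (true, true) => lam | (true, false) => const_mx delta - lam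
  | (false, true) => 0 | (false, false) => const_mx (1 - delta)
  end.
pose G o := M^t* *m diag_mx (mu o) *m M.
have mu_ge0 o k : 0 <= mu o 0 k.
  have /andP [lam_ge0 lam_le] := psd_spectral_diag_bounds psdP normP k.
  by case: o => [[] []]; rewrite /= ?mxE ?subr_ge0.
have sum_G (Pr : pred (bool * bool)) :
    \sum_(o | Pr o) G o = M^t* *m diag_mx (\sum_(o | Pr o) mu o) *m M.
  by rewrite linear_sum mulmx_sumr mulmx_suml.
exists G, (fun o k a => sqrtC (mu o 0 k) * M k a); split.
- by move=> o a b; apply: unitary_conj_diag_gram.
- move=> p; rewrite sum_G big_mkcond sumr_bool_pair /=; case: p => /=.
    by rewrite !addr0 -eP.
  suff -> : 0 + (const_mx delta - lam) + (0 + const_mx (1 - delta)) =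
            const_mx 1 - lam.
    by rewrite linearB /= mulmxBr mulmxBl unitary_conj_scalar // -eP.
  by apply/rowP => k; rewrite !mxE; ring.
- move=> b; rewrite sum_G -(unitary_conj_scalar _ uM).
  congr (_ *m diag_mx _ *m _); apply/rowP => k.
  by rewrite big_mkcond sumr_bool_pair /=; case: b; rewrite !mxE; ring.
Qed.

Theorem lemma4 (d n : nat) (hd : (0 < d)%N)
  (rho : basisn n d -> basisn n d -> algC) (P : 'M[algC]_d) (delta c : algC)
  (hrho : is_state rho) (hP : is_two_povm P) (hnorm : opnorm_le P delta)
  (hdelta1 : delta <= 1) (hc : c \is Num.real) :
  prob_NP_ge rho P delta c <=
  \sum_(i < n.+1 | n%:R * (delta + c) <= i%:R)
     'C(n, i)%:R * delta ^+ i * (1 - delta) ^+ (n - i).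
Proof.
have [G [B [G_gram decP decB]]] := povm_refinement hP.1 hnorm hdelta1.
have w_ge0 := born_prod_kernel_ge0 hrho.1 G_gram.
pose large (N : nat) := n%:R * (delta + c) <= N%:R.
rewrite /prob_NP_ge (eq_bigr _ (fun s _ => outcome_probE rho P s)).
rewrite (born_coarse_event rho _ decP).
apply: le_trans (ler_sum_subpred
  (Q := fun g => large (NP (coarse (fun o => o.1) g))) _ w_ge0) _.
  move=> g; apply: ler_mul_nat_of_ler_div.
  by apply/subset_leq_card/subsetP => i; rewrite !inE !ffunE => /andP [].
rewrite -(born_coarse_event rho (fun s => large (NP s)) decB).
under eq_bigr do rewrite born_prod_scalar //.
rewrite /NP (@sum_bernoulli_strings _ _ large) card_ord.
by under [in X in _ <= X]eq_bigr do rewrite -mulrA.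
Qed.
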